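(* Let $n\ge1$, $\gamma\ge0$, let $A$ be a disk in $\mathbb{R}^2$ of radius $n^\gamma$, and let $z>0$ with $z\le n^\gamma$. Let $Q$ be a convex cell of a partition of $A$ into convex cells each of diameter at most $z$. Let $s,d$ be independent uniformly distributed points in $A$. Then the probability that the line segment from $s$ to $d$ intersects $Q$ is at most $6\,\frac{z}{n^\gamma}$. *)

From HB Require Import structures.
From mathcomp Require Import all_boot all_order all_algebra.
From mathcomp Require Import all_classical all_reals all_analysis.
Set Implicit Arguments. Unset Strict Implicit. Unset Printing Implicit Defensive.
Import Order.TTheory GRing.Theory Num.Theory.
Import numFieldNormedType.Exports.
Local Open Scope classical_set_scope.
Local Open Scope ring_scope.

Section Defs.
Variable R : realType.
Local Notation P2 := (R * R)%type.

Definition dist2 (p q : P2) : R :=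
  Num.sqrt ((p.1 - q.1) ^+ 2 + (p.2 - q.2) ^+ 2).

Definition disk (c : P2) (r : R) : set P2 :=
  [set p | (p.1 - c.1) ^+ 2 + (p.2 - c.2) ^+ 2 <= r ^+ 2].

Definition cvx (t : R) (p q : P2) : P2 :=
  ((1 - t) * p.1 + t * q.1, (1 - t) * p.2 + t * q.2).

Definition convex_set2 (Q : set P2) : Prop :=
  forall p q t, Q p -> Q q -> 0 <= t <= 1 -> Q (cvx t p q).

Definition diam_le (Q : set P2) (z : R) : Prop :=
  forall p q, Q p -> Q q -> dist2 p q <= z.

Definition segment (s d : P2) : set P2 :=
  [set cvx t s d | t in `[0, 1]%classic].

Definition convex_partition (A : set P2) (z : R) (Cells : set (set P2)) : Prop :=
  [/\ (forall C, Cells C -> C !=set0 /\ convex_set2 C /\ diam_le C z),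
      (forall C C', Cells C -> Cells C' -> C `&` C' !=set0 -> C = C') &
      \bigcup_(C in Cells) C = A].

Definition seg_meets (Q : set P2) : set (P2 * P2) :=
  [set sd | segment sd.1 sd.2 `&` Q !=set0].

End Defs.

Definition leb2 (R : realType) :=
  ((@lebesgue_measure R) \x (@lebesgue_measure R))%E.
Definition leb4 (R : realType) := ((@leb2 R) \x (@leb2 R))%E.

(* If the segment from s to d meets Q at parameter t, then its point at the
   nearest of the 2L grid parameters t_k = (2k+1)/(4L) lies in the square of
   side z containing Q, enlarged by r/(2L) on each side, where r is the radius
   and L = floor(r/z).  For fixed s the set of d whose t-point lies in a square
   of side w is a square of side w/t, and for fixed d the set of s is a square
   of side w/(1-t); so the t_k-event has measure at most
   |A| w^2 / max(t_k, 1-t_k)^2, and these weights telescope to at most 4L.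
   With w = z + r/L this gives |A| * 16.2 z r, while ten inscribed strips show
   |A| >= 2.7 r^2.  When r <= 6z the bound exceeds |A|^2. *)

From HB Require Import structures.
From mathcomp Require Import all_boot all_order all_algebra.
From mathcomp Require Import all_classical all_reals all_analysis.
From mathcomp Require Import measurable_realfun ring lra.
Import Order.TTheory GRing.Theory Num.Theory.
Import numFieldNormedType.Exports.
Set Implicit Arguments. Unset Strict Implicit. Unset Printing Implicit Defensive.
Local Open Scope classical_set_scope.
Local Open Scope ring_scope.

Section measurability.
Variable R : realType.
Local Notation P2 := (R * R)%type.

Lemma measurable_cvx (t : R) :
  measurable_fun setT (fun sd : P2 * P2 => cvx t sd.1 sd.2).
Proof.
have mc (f g : P2 * P2 -> R) : measurable_fun setT f -> measurable_fun setT g ->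
    measurable_fun setT (fun sd => (1 - t) * f sd + t * g sd).
  move=> mf mg; apply: measurable_funD; apply: measurable_funM => //.
apply: measurable_fun_pair; apply: mc.
- exact: measurableT_comp measurable_fst measurable_fst.
- exact: measurableT_comp measurable_fst measurable_snd.
- exact: measurableT_comp measurable_snd measurable_fst.
- exact: measurableT_comp measurable_snd measurable_snd.
Qed.

Lemma measurable_disk (c : P2) (r : R) : measurable (disk c r).
Proof.
have mB (f : P2 -> R) (a : R) : measurable_fun setT f ->
    measurable_fun setT (fun p => (f p - a) ^+ 2).
  by move=> mf; apply: (measurable_funX (f := fun p => f p - a));
    exact: measurable_funB.
pose f (p : P2) := (p.1 - c.1) ^+ 2 + (p.2 - c.2) ^+ 2.
have mf : measurable_fun setT f.
  by apply: measurable_funD; apply: mB; [exact: measurable_fst|exact: measurable_snd].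
rewrite (_ : disk c r = f @^-1` `]-oo, r ^+ 2]).
  by rewrite -[_ @^-1` _]setTI; exact: mf (measurable_itv _).
by apply/seteqP; split => p /=; rewrite in_itv.
Qed.

End measurability.

Lemma leb2_sigma_finite (R : realType) : sigma_finite setT (@leb2 R).
Proof.
have /sigma_finiteP[F [TF ndF Foo]] := sigma_finiteT (@lebesgue_measure R).
exists (fun n => F n `*` F n).
  rewrite -setXTT TF predeqE => -[x y]; split.
    move=> [/= [n _ Fnx] [k _ Fky]]; exists (maxn n k) => //; split.
    - by move: x Fnx; exact/subsetPset/ndF/leq_maxl.
    - by move: y Fky; exact/subsetPset/ndF/leq_maxr.
  by move=> [n _ [/= ? ?]]; split; exists n.
move=> k; have [mFk Fkoo] := Foo k; split; first exact: measurableX.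
by rewrite /leb2 product_measure1E// lte_mul_pinfty// ge0_fin_numE.
Qed.

HB.instance Definition _ (R : realType) := Measure.on (@leb2 R).
HB.instance Definition _ (R : realType) :=
  Measure_isSigmaFinite.Build _ _ _ (@leb2 R) (@leb2_sigma_finite R).

Section squares.
Variable R : realType.
Local Notation P2 := (R * R)%type.

Lemma lebesgue_measure_itv_width (a w : R) (b1 b2 : bool) : 0 < w ->
  lebesgue_measure [set` Interval (BSide b1 a) (BSide b2 (a + w))] = w%:E.
Proof.
move=> w0; rewrite lebesgue_measure_itv /= -EFinD (addrC a) addrK.
by rewrite lte_fin ltrDr w0.
Qed.

Definition square (a : P2) (w : R) : set P2 :=
  `[a.1, a.1 + w]%classic `*` `[a.2, a.2 + w]%classic.

Lemma measurable_square a w : measurable (square a w).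
Proof. by apply: measurableX; exact: measurable_itv. Qed.

Lemma leb2_square a w : 0 < w -> @leb2 R (square a w) = (w ^+ 2)%:E.
Proof.
move=> w0; rewrite /leb2 product_measure1E; try exact: measurable_itv.
by rewrite expr2 EFinM; congr (_ * _)%E; exact: lebesgue_measure_itv_width.
Qed.

Lemma affine_in_itv (u t a w x : R) : 0 < t ->
  (u + t * x \in `[a, a + w]) = (x \in `[(a - u) / t, (a - u) / t + w / t]).
Proof.
move=> t0; rewrite !in_itv /= -mulrDl ler_pdivrMr // ler_pdivlMr //.
by apply/andP/andP => -[h1 h2]; split; lra.
Qed.

Lemma leb2_affine_preimage_square (u : P2) (t : R) a w : 0 < t -> 0 < w ->
  @leb2 R [set p | square a w (u.1 + t * p.1, u.2 + t * p.2)] =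
  ((w / t) ^+ 2)%:E.
Proof.
move=> t0 w0.
rewrite -(leb2_square ((a.1 - u.1) / t, (a.2 - u.2) / t)); last first.
  exact: divr_gt0.
by congr (leb2 _); apply/seteqP; split => p; rewrite /square /= !affine_in_itv.
Qed.

End squares.

Lemma integral_le_measure_mul d (T : measurableType d) (R : realType)
    (mu : {measure set T -> \bar R}) (A : set T) (f : T -> \bar R) (m : R) :
  measurable A -> measurable_fun setT f -> 0 <= m ->
  (forall x, 0 <= f x)%E -> (forall x, ~ A x -> f x = 0%E) ->
  (forall x, A x -> f x <= m%:E)%E ->
  (\int[mu]_x f x <= mu A * m%:E)%E.
Proof.
move=> mA mf m0 f0 f0A fm.
have mIA : measurable_fun setT (fun x => (\1_A x)%:E : \bar R).
  exact/measurable_EFinP/measurable_indic.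
rewrite -(setIT A) -integral_indic // -ge0_integralZr ?lee_fin //.
apply: ge0_le_integral => //; first exact: emeasurable_funM.
move=> x _; rewrite indicE; have [/set_mem Ax|nAx] := boolP (x \in A).
  by rewrite mul1e fm.
by rewrite mul0e f0A // => Ax; rewrite mem_set in nAx.
Qed.

Section section_bounds.
Local Open Scope ereal_scope.
Context d1 d2 (T1 : measurableType d1) (T2 : measurableType d2) (R : realType).
Variables (m1 : {sigma_finite_measure set T1 -> \bar R})
  (m2 : {sigma_finite_measure set T2 -> \bar R}).

Lemma product_measure1_setX_le (X : set (T1 * T2)) A1 A2 (m : R) :
  measurable X -> measurable A1 -> measurable A2 -> (0 <= m)%R ->
  (forall x, A1 x -> m2 (xsection X x) <= m%:E) ->
  (m1 \x m2) (X `&` (A1 `*` A2)) <= m1 A1 * m%:E.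
Proof.
move=> mX mA1 mA2 m0 hm; have mXA := measurableI _ _ mX (measurableX mA1 mA2).
apply: integral_le_measure_mul => //; first exact: measurable_fun_xsection.
- move=> x nA1x /=; rewrite xsectionI notin_xsectionX ?setI0 ?measure0 //.
  by apply/negP => /set_mem.
- move=> x A1x /=; apply: le_trans (hm x A1x).
  apply: le_measure; rewrite ?inE; [exact: measurable_xsection..|].
  by rewrite xsectionI; exact: subIsetl.
Qed.

Lemma product_measure2_setX_le (X : set (T1 * T2)) A1 A2 (m : R) :
  measurable X -> measurable A1 -> measurable A2 -> (0 <= m)%R ->
  (forall y, A2 y -> m1 (ysection X y) <= m%:E) ->
  (m1 \x m2) (X `&` (A1 `*` A2)) <= m2 A2 * m%:E.
Proof.
move=> mX mA1 mA2 m0 hm; have mXA := measurableI _ _ mX (measurableX mA1 mA2).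
rewrite (@product_measure_unique _ _ _ _ _ m1 m2 (m1 \x^ m2)) //; last first.
  by move=> *; exact: product_measure2E.
apply: integral_le_measure_mul => //; first exact: measurable_fun_ysection.
- move=> y nA2y /=; rewrite ysectionI notin_ysectionX ?setI0 ?measure0 //.
  by apply/negP => /set_mem.
- move=> y A2y /=; apply: le_trans (hm y A2y).
  apply: le_measure; rewrite ?inE; [exact: measurable_ysection..|].
  by rewrite ysectionI; exact: subIsetl.
Qed.

End section_bounds.

Section segment_point_events.
Variable R : realType.
Local Notation P2 := (R * R)%type.

Definition cvx_preimage (t : R) (B : set P2) : set (P2 * P2) :=
  [set sd | B (cvx t sd.1 sd.2)].

Lemma measurable_cvx_preimage t B : measurable B -> measurable (cvx_preimage t B).
Proof. by move=> mB; rewrite -[cvx_preimage _ _]setTI; exact: measurable_cvx. Qed.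

Lemma leb4_cvx_preimage_square_le (t : R) (a : P2) (w : R) (A : set P2) :
  0 < t -> 0 < w -> measurable A ->
  (@leb4 R (cvx_preimage t (square a w) `&` (A `*` A))
    <= @leb2 R A * ((w / t) ^+ 2)%:E)%E.
Proof.
move=> t0 w0 mA; apply: product_measure1_setX_le => //; last 2 first.
- exact: sqr_ge0.
- move=> s _; pose u := ((1 - t) * s.1, (1 - t) * s.2).
  have -> : xsection (cvx_preimage t (square a w)) s =
      [set p | square a w (u.1 + t * p.1, u.2 + t * p.2)].
    by apply/seteqP; split => p; rewrite /xsection /= inE.
  by rewrite -(leb2_affine_preimage_square u a t0 w0).
exact: measurable_cvx_preimage (measurable_square _ _).
Qed.

Lemma leb4_cvx_preimage_square_le_onem (t : R) (a : P2) (w : R) (A : set P2) :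
  t < 1 -> 0 < w -> measurable A ->
  (@leb4 R (cvx_preimage t (square a w) `&` (A `*` A))
    <= @leb2 R A * ((w / (1 - t)) ^+ 2)%:E)%E.
Proof.
move=> t1 w0 mA; apply: product_measure2_setX_le => //; last 2 first.
- exact: sqr_ge0.
- move=> d _; pose u := (t * d.1, t * d.2).
  have -> : ysection (cvx_preimage t (square a w)) d =
      [set p | square a w (u.1 + (1 - t) * p.1, u.2 + (1 - t) * p.2)].
    by apply/seteqP; split => p; rewrite /ysection /= inE /cvx /= !(addrC (t * _)).
  by rewrite -(leb2_affine_preimage_square u a _ w0) ?subr_gt0.
exact: measurable_cvx_preimage (measurable_square _ _).
Qed.

End segment_point_events.

Section disk_area.
Variable R : realType.
Local Notation P2 := (R * R)%type.

(* Half-widths of ten horizontal strips of height r/6 inscribed in the disk;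
   their areas add up to 2.713 r^2. *)
Definition strip_halfwidth (j : nat) : R :=
  nth 0 [:: 55/100; 74/100; 86/100; 94/100; 98/100;
            98/100; 94/100; 86/100; 74/100; 55/100] j.

Definition disk_strip (c : P2) (r : R) (j : nat) : set P2 :=
  `[c.1 - strip_halfwidth j * r, c.1 - strip_halfwidth j * r
                                 + 2 * strip_halfwidth j * r]%classic `*`
  `[c.2 + (j%:R - 5) * (r / 6), c.2 + (j%:R - 5) * (r / 6) + r / 6[%classic.

Lemma strip_halfwidth_gt0 j : (j < 10)%N -> 0 < strip_halfwidth j.
Proof. by rewrite /strip_halfwidth; do 10?[case: j => [|j] /=; first lra]. Qed.

Lemma disk_strip_sub c r j : 0 < r -> (j < 10)%N -> disk_strip c r j `<=` disk c r.
Proof.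
move=> r0 j10 [x y]; rewrite /disk_strip /disk /= !in_itv /=.
move=> [/andP[x1 x2] /andP[y1 y2]].
have hx : (x - c.1) ^+ 2 <= strip_halfwidth j ^+ 2 * r ^+ 2.
  by have := strip_halfwidth_gt0 j10; nra.
clear x1 x2; move: j10 hx y1 y2; rewrite /strip_halfwidth.
do 10?[case: j => [|j] /=; first by move=> _ hx y1 y2; nra].
by rewrite !ltnS ltn0.
Qed.

Lemma trivIset_disk_strip c r : 0 < r -> trivIset setT (disk_strip c r).
Proof.
move=> r0 i j _ _ [[x y]]; rewrite /disk_strip /= !in_itv /=.
move=> [[_ /andP[i1 i2]] [_ /andP[j1 j2]]].
have r6 : 0 < r / 6 by lra.
have lt_ij : (i%:R - 5) * (r / 6) < (j%:R - 4) * (r / 6) :> R by lra.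
have lt_ji : (j%:R - 5) * (r / 6) < (i%:R - 4) * (r / 6) :> R by lra.
rewrite ltr_pM2r // in lt_ij; rewrite ltr_pM2r // in lt_ji.
have le_ij : (i < j.+1)%N by rewrite -(ltr_nat R) -natr1; lra.
have le_ji : (j < i.+1)%N by rewrite -(ltr_nat R) -natr1; lra.
by apply/eqP; rewrite eqn_leq -ltnS le_ij -ltnS le_ji.
Qed.

Lemma leb2_disk_strip c r j : 0 < r -> (j < 10)%N ->
  @leb2 R (disk_strip c r j) = (2 * strip_halfwidth j * r * (r / 6))%:E.
Proof.
move=> r0 j10; rewrite /leb2 product_measure1E; try exact: measurable_itv.
have w0 : 0 < 2 * strip_halfwidth j * r.
  by rewrite !mulr_gt0 // strip_halfwidth_gt0.
by rewrite EFinM; congr (_ * _)%E; apply: lebesgue_measure_itv_width => //; lra.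
Qed.

Lemma leb2_disk_ge c r : 0 < r -> ((27 / 10 * r ^+ 2)%:E <= @leb2 R (disk c r))%E.
Proof.
move=> r0; have mS (j : 'I_10) : measurable (disk_strip c r j).
  by apply: measurableX; exact: measurable_itv.
apply: (@le_trans _ _ (@leb2 R (\big[setU/set0]_(j < 10) disk_strip c r j))).
  rewrite measure_bigsetU_ord //; last first.
    by move=> i j _ _ /(trivIset_disk_strip r0 I I) /val_inj.
  rewrite (eq_bigr (fun j : 'I_10 => (2 * strip_halfwidth j * r * (r / 6))%:E));
    last by move=> j _; exact: leb2_disk_strip.
  by rewrite sumEFin lee_fin !big_ord_recr big_ord0 /= /strip_halfwidth /=; nra.
apply: le_measure; rewrite ?inE //.
- by apply: bigsetU_measurable => j _; exact: mS.
- exact: measurable_disk.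
by rewrite -bigcup_mkord => p [j /= j10]; exact: disk_strip_sub.
Qed.

End disk_area.

Section grid_weights.
Variable R : realFieldType.

Lemma odd_frac_inv_sqr_le (M x : R) : 0 < M -> 0 < x ->
  ((2 * x + 1) / M) ^- 2 <= M ^+ 2 / 4 * (x^-1 - (x + 1)^-1).
Proof.
move=> M0 x0.
have -> : ((2 * x + 1) / M) ^- 2 = M ^+ 2 / 4 * (4 / (2 * x + 1) ^+ 2).
  by field; lra.
rewrite ler_wpM2l ?divr_ge0 ?sqr_ge0 //.
have -> : x^-1 - (x + 1)^-1 = (x * (x + 1))^-1 by field; lra.
rewrite ler_pdivrMr ?exprn_gt0 ?ltr_wpDl //; last lra.
by rewrite mulrC ler_pdivlMr; nra.
Qed.

(* Midpoints of the 2L cells of a uniform grid of [0, 1], and the weight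
   1 / max(t, 1 - t)^2 of the better of the two section bounds at t. *)
Definition grid_time (L k : nat) : R := (2 * k%:R + 1) / (4 * L%:R).

Definition grid_weight (L k : nat) : R :=
  if (L <= k)%N then grid_time L k ^- 2 else (1 - grid_time L k) ^- 2.

Lemma grid_time_gt0 L k : (0 < L)%N -> 0 < grid_time L k.
Proof.
by move=> L0; rewrite divr_gt0 ?mulr_gt0 ?ltr0n // ltr_wpDl ?mulr_ge0.
Qed.

Lemma grid_time_lt1 L k : (k < 2 * L)%N -> grid_time L k < 1.
Proof.
move=> k2L; have L0 : 0 < L%:R :> R by rewrite ltr0n; case: L k2L => // k2L.
have k1 : k%:R + 1 <= 2 * L%:R :> R by rewrite natr1 -natrM ler_nat.
by rewrite ltr_pdivrMr; lra.
Qed.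

Lemma sum_grid_weight_le L : (0 < L)%N ->
  \sum_(0 <= k < 2 * L) grid_weight L k <= 4 * L%:R.
Proof.
move=> L0; have L1 : 1 <= L%:R :> R by rewrite ler1n.
pose M : R := 4 * L%:R; pose K := M ^+ 2 / 4.
(* The terms of [odd_frac_inv_sqr_le] telescope along [f]; both branches equal
   K / L at k = L. *)
pose f k : R :=
  if (k <= L)%N then K / (2 * L%:R - k%:R) else 2 * K / L%:R - K / k%:R.
have f_hi k : (L <= k)%N -> f k = 2 * K / L%:R - K / k%:R.
  move=> Lk; rewrite /f; have [kL|//] := leqP k L.
  have -> : k = L by apply/eqP; rewrite eqn_leq kL Lk.
  by field; lra.
have -> : 4 * L%:R = f (2 * L)%N - f 0%N.
  by rewrite f_hi ?leq_pmull // /f leq0n natrM /K /M; field; lra.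
rewrite -telescope_sumr //.
apply: ler_sum_nat => k /andP[_ k2L]; rewrite /grid_weight /grid_time -/M.
case: leqP => [Lk|kL].
  have k0 : 0 < k%:R :> R by rewrite ltr0n (leq_trans L0).
  rewrite !f_hi ?(leq_trans Lk) //.
  have -> : 2 * K / L%:R - K / k.+1%:R - (2 * K / L%:R - K / k%:R) =
      K * (k%:R^-1 - (k%:R + 1)^-1) by rewrite -natr1; field; lra.
  by apply: odd_frac_inv_sqr_le; rewrite // /M mulr_gt0 // ltr0n.
have k1 : k%:R + 1 <= L%:R :> R by rewrite natr1 ler_nat.
rewrite /f kL (ltnW kL).
have -> : K / (2 * L%:R - k.+1%:R) - K / (2 * L%:R - k%:R) =
    K * ((2 * L%:R - k%:R - 1)^-1 - (2 * L%:R - k%:R - 1 + 1)^-1).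
  by rewrite -natr1; field; lra.
have -> : 1 - (2 * k%:R + 1) / M = (2 * (2 * L%:R - k%:R - 1) + 1) / M.
  by rewrite /M; field; lra.
by apply: odd_frac_inv_sqr_le; rewrite /M; lra.
Qed.

End grid_weights.

Section geometry.
Variable R : realType.
Local Notation P2 := (R * R)%type.

Lemma inf_window (E : set R) (z : R) : E !=set0 ->
  (forall x y, E x -> E y -> x - y <= z) ->
  forall x, E x -> inf E <= x <= inf E + z.
Proof.
move=> [e Ee] dz x Ex; have lbE : has_lbound E.
  by exists (e - z) => y Ey; have := dz e y Ee Ey; lra.
rewrite ge_inf //= -lerBlDr; apply: lb_le_inf; first by exists e.
by move=> y Ey; have := dz x y Ex Ey; lra.
Qed.

Lemma coord1_le_dist2 (p q : P2) : p.1 - q.1 <= dist2 p q.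
Proof.
rewrite /dist2 (le_trans (ler_norm _)) // -sqrtr_sqr ler_wsqrtr //.
by rewrite lerDl sqr_ge0.
Qed.

Lemma coord2_le_dist2 (p q : P2) : p.2 - q.2 <= dist2 p q.
Proof.
rewrite /dist2 (le_trans (ler_norm _)) // -sqrtr_sqr ler_wsqrtr //.
by rewrite lerDr sqr_ge0.
Qed.

Lemma diam_le_sub_square (Q : set P2) (z : R) : Q !=set0 -> diam_le Q z ->
  exists a, Q `<=` square a z.
Proof.
move=> [q Qq] dQ; exists (inf [set p.1 | p in Q], inf [set p.2 | p in Q]).
move=> p Qp; split; rewrite /= in_itv /=.
- apply: inf_window; [by exists q.1, q| |by exists p].
  move=> _ _ [p1 Qp1 <-] [p2 Qp2 <-].
  exact: le_trans (coord1_le_dist2 p1 p2) (dQ _ _ Qp1 Qp2).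
- apply: inf_window; [by exists q.2, q| |by exists p].
  move=> _ _ [p1 Qp1 <-] [p2 Qp2 <-].
  exact: le_trans (coord2_le_dist2 p1 p2) (dQ _ _ Qp1 Qp2).
Qed.

Lemma disk_coord_le (c p : P2) (r : R) : 0 <= r -> disk c r p ->
  `|p.1 - c.1| <= r /\ `|p.2 - c.2| <= r.
Proof.
rewrite /disk /= => r0 pA.
by split; rewrite -(ler_pXn2r (n := 2)) ?nnegrE ?normr_ge0 // real_normK ?num_real;
  have := sqr_ge0 (p.1 - c.1); have := sqr_ge0 (p.2 - c.2); lra.
Qed.

Lemma square_widen (a : P2) (w e : R) (p q : P2) : square a w p ->
  `|q.1 - p.1| <= e -> `|q.2 - p.2| <= e ->
  square (a.1 - e, a.2 - e) (w + 2 * e) q.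
Proof.
rewrite /square /= !in_itv /= => -[/andP[p1 p1'] /andP[p2 p2']].
by rewrite !ler_norml => /andP[q1 q1'] /andP[q2 q2']; split; apply/andP; split; lra.
Qed.

Lemma grid_time_near (L : nat) (t : R) : (0 < L)%N -> 0 <= t <= 1 ->
  exists2 k, (k < 2 * L)%N & `|grid_time R L k - t| <= (4 * L%:R)^-1.
Proof.
move=> L0 /andP[t0 t1]; have L0' : 0 < L%:R :> R by rewrite ltr0n.
pose k := minn (Num.truncn (2 * L%:R * t)) (2 * L).-1.
have k2L : (k < 2 * L)%N by rewrite gtn_min prednK ?muln_gt0 // leqnn orbT.
exists k => //.
have x0 : 0 <= 2 * L%:R * t by rewrite !mulr_ge0 // ltW.
have /andP[tr1 tr2] := truncn_itv x0.
have lek : k%:R <= 2 * L%:R * t.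
  by rewrite (le_trans _ tr1) // ler_nat geq_minl.
have gek : 2 * L%:R * t <= k%:R + 1.
  rewrite /k; case: leqP => [_|lt]; first by rewrite natr1 ltW.
  have -> : (((2 * L).-1)%:R + 1 : R) = 2 * L%:R.
    by rewrite natr1 prednK ?muln_gt0 // natrM.
  by rewrite ler_piMr // mulr_ge0 // ltW.
have -> : grid_time R L k - t = (2 * k%:R + 1 - 4 * L%:R * t) / (4 * L%:R).
  by rewrite /grid_time; field; lra.
have L4 : 0 < 4 * L%:R :> R by rewrite mulr_gt0.
rewrite normrM normfV (gtr0_norm L4) ler_pdivrMr // mulVf ?lt0r_neq0 //.
by rewrite ler_norml; apply/andP; split; lra.
Qed.

End geometry.

Section grid_cover.
Variable R : realType.
Local Notation P2 := (R * R)%type.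

Definition grid_cover (L : nat) (B : set P2) : set (P2 * P2) :=
  \big[setU/set0]_(k < 2 * L) cvx_preimage (grid_time R L k) B.

Lemma measurable_grid_cover L B : measurable B -> measurable (grid_cover L B).
Proof.
by move=> mB; apply: bigsetU_measurable => k _; exact: measurable_cvx_preimage.
Qed.

Lemma seg_meets_sub_grid_cover (Q : set P2) (a c : P2) (r z : R) (L : nat) :
  0 <= r -> (0 < L)%N -> Q `<=` square a z ->
  let e := r / (2 * L%:R) in
  seg_meets Q `&` (disk c r `*` disk c r) `<=`
    grid_cover L (square (a.1 - e, a.2 - e) (z + 2 * e)).
Proof.
move=> r0 L0 QS e [s d] [[_ [[t t01 <-] Qp]] [/= sA dA]].
have {}t01 : 0 <= t <= 1 by rewrite /= in_itv in t01.
have [k k2L near_t] := grid_time_near L0 t01.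
rewrite /grid_cover -(bigcup_mkord _ (fun k => cvx_preimage (grid_time R L k) _)).
exists k => //.
have [s1 s2] := disk_coord_le r0 sA; have [d1 d2] := disk_coord_le r0 dA.
have L0' : 0 < L%:R :> R by rewrite ltr0n.
have e_eq : e = (4 * L%:R)^-1 * (2 * r) by rewrite /e; field; lra.
have near_coord (x y : R) : `|x - y| <= 2 * r ->
    `|((1 - grid_time R L k) * y + grid_time R L k * x) - ((1 - t) * y + t * x)|
      <= e.
  move=> xy; rewrite e_eq (_ : _ - _ = (grid_time R L k - t) * (x - y)); last by ring.
  by rewrite normrM ler_pM.
have diam2 (i j o : R) : `|i - o| <= r -> `|j - o| <= r -> `|i - j| <= 2 * r.
  by move=> io jo; rewrite (le_trans (ler_distD o _ _)) // (distrC o); lra.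
apply: square_widen (QS _ Qp) _ _; apply: near_coord.
- exact: diam2 d1 s1.
- exact: diam2 d2 s2.
Qed.

Lemma leb4_grid_cover_le (A : set P2) (a : P2) (w : R) (L : nat) :
  (0 < L)%N -> 0 < w -> measurable A ->
  (@leb4 R (grid_cover L (square a w) `&` (A `*` A))
    <= @leb2 R A * (w ^+ 2 * (4 * L%:R))%:E)%E.
Proof.
move=> L0 w0 mA; pose F k := cvx_preimage (grid_time R L k) (square a w) `&` (A `*` A).
have mF k : measurable (F k).
  exact: measurableI (measurable_cvx_preimage _ (measurable_square _ _))
    (measurableX mA mA).
apply: (le_trans (content_subadditive (@leb4 R) (F := F) (n := 2 * L) _ _ _)).
- by move=> k _; exact: mF.
- exact: measurableI (measurable_grid_cover _ (measurable_square _ _))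
    (measurableX mA mA).
- move=> sd [+ AAsd]; rewrite /grid_cover.
  rewrite -(bigcup_mkord _ (fun k => cvx_preimage (grid_time R L k) _)).
  by rewrite -(bigcup_mkord _ F) => -[k k2L Gk]; exists k.
apply: (@le_trans _ _ (\sum_(k < 2 * L) (@leb2 R A * (w ^+ 2 * grid_weight R L k)%:E))%E).
  apply: lee_sum => k _; rewrite /F /grid_weight; case: leqP => _.
    by rewrite -exprVn -exprMn leb4_cvx_preimage_square_le ?grid_time_gt0.
  by rewrite -exprVn -exprMn leb4_cvx_preimage_square_le_onem ?grid_time_lt1.
rewrite -ge0_sume_distrr; last first.
  move=> k _; rewrite lee_fin mulr_ge0 ?sqr_ge0 // /grid_weight.
  by case: ifP => _; rewrite invr_ge0 sqr_ge0.
rewrite sumEFin -mulr_sumr lee_wpmul2l // lee_fin ler_wpM2l ?sqr_ge0 //.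
by have := sum_grid_weight_le R L0; rewrite big_mkord.
Qed.

End grid_cover.

Lemma grid_cover_bound_le (R : realFieldType) (z r L : R) :
  0 < z -> 6 <= L -> L * z <= r -> r <= (L + 1) * z ->
  (z + r / L) ^+ 2 * (4 * L) <= 162 / 10 * z * r.
Proof.
move=> z0 L6 Lzr rLz; have L0 : 0 < L by lra.
have -> : (z + r / L) ^+ 2 * (4 * L) = 4 * (L * z + r) ^+ 2 / L by field; lra.
rewrite ler_pdivrMr //; set u := L * z.
have uz : 6 * z <= u by rewrite /u ler_wpM2r //; lra.
have -> : 162 / 10 * z * r * L = 162 / 10 * u * r by rewrite /u; ring.
have -> : r = u + (r - u) by ring.
have s0 : 0 <= r - u by rewrite /u; lra.
have sz : r - u <= z by rewrite /u; lra.
move: (r - u) s0 sz => s s0 sz.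
have p1 : 0 <= (u - 6 * s) * (u + 6 * s) by apply: mulr_ge0; lra.
have p2 : 0 <= u * s by apply: mulr_ge0; lra.
nra.
Qed.

Lemma truncn_div_bounds (R : archiRealFieldType) (r z : R) : 0 < z -> 6 * z < r ->
  let L := Num.truncn (r / z) in
  [/\ (0 < L)%N, 6 <= L%:R :> R, L%:R * z <= r & r < (L%:R + 1) * z].
Proof.
move=> z0 big L; have r0 : 0 < r by lra.
have /andP[Lz1 Lz2] : L%:R * z <= r < (L%:R + 1) * z.
  have /andP[] := truncn_itv (divr_ge0 (ltW r0) (ltW z0)).
  by rewrite -natr1 ler_pdivlMr // ltr_pdivrMr // => -> ->.
have L6 : 6 <= L%:R :> R.
  have : 6 * z < (L%:R + 1) * z by lra.
  rewrite ltr_pM2r // => L5; suff : (5 < L)%N by rewrite -(ler_nat R 6).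
  by rewrite -(ltr_nat R); lra.
by split => //; rewrite -(ltr_nat R); lra.
Qed.

Theorem seg_meets_outer_le (R : realType) (c : R * R) (r z : R) (Q : set (R * R)) :
  0 < r -> 0 < z -> Q !=set0 -> diam_le Q z ->
  exists F : set ((R * R) * (R * R)),
    [/\ measurable F, seg_meets Q `<=` F &
      (@leb4 R (F `&` (disk c r `*` disk c r))
        <= (6 * z / r)%:E * (@leb2 R (disk c r) * @leb2 R (disk c r)))%E].
Proof.
move=> r0 z0 Qn dQ; set A := disk c r; have mA : measurable A := measurable_disk c r.
have [small|big] := leP r (6 * z).
  exists setT; split => //; rewrite setTI /leb4 product_measure1E //.
  by rewrite lee_pemull ?mule_ge0 // lee_fin ler_pdivlMr // mul1r.
have [L0 L6 Lz1 Lz2] := truncn_div_bounds z0 big.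
set L := Num.truncn (r / z) in L0 L6 Lz1 Lz2 *.
have [a Qa] := diam_le_sub_square Qn dQ.
pose e := r / (2 * L%:R).
exists (~` (A `*` A) `|` grid_cover L (square (a.1 - e, a.2 - e) (z + 2 * e))).
split.
- exact: measurableU (measurableC (measurableX mA mA))
    (measurable_grid_cover _ (measurable_square _ _)).
- move=> sd Qsd; have [AAsd|] := pselect ((A `*` A) sd); last by left.
  by right; exact: seg_meets_sub_grid_cover (ltW r0) L0 Qa sd (conj Qsd AAsd).
rewrite setIUl setICl set0U.
have e0 : 0 < e by rewrite divr_gt0 // mulr_gt0 // ltr0n.
have w0 : 0 < z + 2 * e by lra.
apply: le_trans (@leb4_grid_cover_le R A (a.1 - e, a.2 - e) _ L L0 w0 mA) _.
rewrite muleCA lee_wpmul2l //.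
apply: le_trans (_ : (162 / 10 * z * r)%:E <= _)%E.
  rewrite lee_fin (_ : z + 2 * e = z + r / L%:R); last by rewrite /e; field; lra.
  exact: grid_cover_bound_le z0 L6 Lz1 (ltW Lz2).
have -> : 162 / 10 * z * r = 6 * z / r * (27 / 10 * r ^+ 2) by field; lra.
rewrite EFinM; apply: lee_wpmul2l (leb2_disk_ge c r0).
by rewrite lee_fin divr_ge0 //; lra.
Qed.

Theorem lemmaC2 (R : realType) (n : nat) (gamma z : R) (c : R * R)
    (Cells : set (set (R * R))) (Q : set (R * R)) :
  (1 <= n)%N -> 0 <= gamma -> 0 < z -> z <= powR n%:R gamma ->
  convex_partition (disk c (powR n%:R gamma)) z Cells -> Cells Q ->
  exists F : set ((R * R) * (R * R)),
    [/\ measurable F, seg_meets Q `<=` F &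
      (@leb4 R (F `&` (disk c (powR n%:R gamma) `*` disk c (powR n%:R gamma)))
        <= (6 * z / powR n%:R gamma)%:E
           * (@leb2 R (disk c (powR n%:R gamma)) * @leb2 R (disk c (powR n%:R gamma))))%E].
Proof.
move=> n1 _ z0 _ [cells _ _] CQ; have [Qn [_ dQ]] := cells Q CQ.
by apply: seg_meets_outer_le => //; rewrite powR_gt0 // ltr0n.
Qed.
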